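(* Let $U\subset\mathbb{R}^{n+1}$ be a bounded open convex domain with $C^3$ boundary of positive normal curvatures, $o\in U$ the origin, $\omega$ the radial function of $\partial U$, $c=\max_{u\in\mathbb{S}^n}\frac{\omega(u)}{\omega(-u)}$, and let $\Phi:\mathbb{S}^n\times\mathbb{R}_{\ge0}\to U$, $\Phi(u,s)=\tanh(s)\,\omega(u)\,u$. Put $d_1=-\frac12\ln\big[\frac12(1+\frac1c)\big]$ and $d_2=-\frac12\ln\big[\frac12(1+c)\big]$. Then for every $d\ge d_1$ there is $\rho_0$ such that $B_\rho^{n+1}\subseteq\Phi(\mathbb{S}^n\times[0,\rho+d])$ for all $\rho\ge\rho_0$, and for every $d\le d_2$ there is $\rho_0$ such that $\Phi(\mathbb{S}^n\times[0,\rho+d])\subseteq B_\rho^{n+1}$ for all $\rho\ge\rho_0$. In particular, for $\rho$ large, $\mathbf{Vol}(\Phi(\mathbb{S}^n\times[0,\rho+d_2]))\le\mathbf{Vol}(B_\rho^{n+1})\le\mathbf{Vol}(\Phi(\mathbb{S}^n\times[0,\rho+d_1]))$; if $U$ is centrally symmetric about $o$ then $d_1=d_2=0$.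
   Context: $B_\rho^{n+1}$ is the closed metric ball of radius $\rho$ centered at $o$ for the Hilbert distance $d_U(p,q)=\frac12\ln\big(\frac{\|q-q_1\|}{\|q-p_1\|}\cdot\frac{\|p-p_1\|}{\|p-q_1\|}\big)$, where $p_1,q_1$ are the intersection points with $\partial U$ of the half-lines $p+\mathbb{R}_{-}(q-p)$, $p+\mathbb{R}_{+}(q-p)$. The radial function $\omega:\mathbb{S}^n\to\mathbb{R}_+$ is such that $u\mapsto\omega(u)u$ parametrizes $\partial U$. $\mathbf{Vol}$ is the Busemann–Hausdorff volume of $(U,F_U)$, i.e. $\int\sigma(p)\,dp$ with $\sigma(p)=\mathbf{Vol}_E(\mathbb{B}^{n+1})/\mathbf{Vol}_E(\{v:F_U(p,v)<1\})$, $F_U(p,v)=\frac12\|v\|\big(\frac1{\|p-p_-\|}+\frac1{\|p-p_+\|}\big)$, $p_\mp$ the intersection points of $p+\mathbb{R}_\mp v$ with $\partial U$. *)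

From Stdlib Require Import Reals.
From mathcomp Require Import ssreflect ssrfun ssrbool eqtype ssrnat seq fintype bigop.

Set Implicit Arguments.
Unset Strict Implicit.
Unset Printing Implicit Defensive.

Local Open Scope R_scope.

Definition Vec (N : nat) := 'I_N -> R.

Section Vectors.
Variable N : nat.

Definition vzero : Vec N := fun _ => 0.
Definition vadd (x y : Vec N) : Vec N := fun i => x i + y i.
Definition vsub (x y : Vec N) : Vec N := fun i => x i - y i.
Definition vscal (a : R) (x : Vec N) : Vec N := fun i => a * x i.
Definition vopp (x : Vec N) : Vec N := fun i => - x i.
Definition basis (j : 'I_N) : Vec N := fun i => if i == j then 1 else 0.
Definition dot (x y : Vec N) : R := \big[Rplus/0]_(i < N) (x i * y i).
Definition norm (x : Vec N) : R := sqrt (dot x x).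
Definition quad (H : 'I_N -> 'I_N -> R) (v : Vec N) : R :=
  \big[Rplus/0]_(i < N) \big[Rplus/0]_(j < N) (H i j * v i * v j).

Definition is_open (V : Vec N -> Prop) : Prop :=
  forall x, V x -> exists r, 0 < r /\ forall y, norm (vsub y x) < r -> V y.
Definition is_bounded (V : Vec N -> Prop) : Prop :=
  exists M, forall x, V x -> norm x <= M.
Definition is_convex (V : Vec N -> Prop) : Prop :=
  forall x y t, V x -> V y -> 0 <= t <= 1 ->
    V (vadd (vscal (1 - t) x) (vscal t y)).
Definition boundary (V : Vec N -> Prop) (x : Vec N) : Prop :=
  (forall e, 0 < e -> exists y, V y /\ norm (vsub y x) < e) /\
  (forall e, 0 < e -> exists y, ~ V y /\ norm (vsub y x) < e).

Definition continuous_on (V : Vec N -> Prop) (g : Vec N -> R) : Prop :=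
  forall x, V x -> forall e, 0 < e -> exists d, 0 < d /\
    forall y, V y -> norm (vsub y x) < d -> Rabs (g y - g x) < e.

Definition partial_at (g : Vec N -> R) (i : 'I_N) (x : Vec N) (l : R) : Prop :=
  derivable_pt_lim (fun t => g (vadd x (vscal t (basis i)))) 0 l.

Definition partial2_at (g : Vec N -> R) (i j : 'I_N) (x : Vec N) (l : R) : Prop :=
  exists r h, 0 < r /\
    (forall y, norm (vsub y x) < r -> partial_at g i y (h y)) /\
    partial_at h j x l.

Fixpoint Ck (k : nat) (g : Vec N -> R) (V : Vec N -> Prop) : Prop :=
  continuous_on V g /\
  match k with
  | O => True
  | S k' => exists Dg : 'I_N -> Vec N -> R,
      (forall i x, V x -> partial_at g i x (Dg i x)) /\
      (forall i, Ck k' (Dg i) V)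
  end.

(** U is a bounded open convex domain with C^3 boundary of positive normal
    curvatures: near the boundary, U is the sublevel set {g < 0} of a C^3
    function g with non-vanishing gradient, whose Hessian is positive definite
    on the tangent hyperplane (= positivity of the second fundamental form). *)
Definition C3_pos_curv_boundary (U : Vec N -> Prop) : Prop :=
  exists (V : Vec N -> Prop) (g : Vec N -> R),
    is_open V /\ (forall x, boundary U x -> V x) /\ Ck 3 g V /\
    (forall x, V x -> (U x <-> g x < 0)) /\
    forall x, boundary U x ->
      exists (G : Vec N) (H : 'I_N -> 'I_N -> R),
        (forall i, partial_at g i x (G i)) /\
        (forall i j, partial2_at g i j x (H i j)) /\
        G <> vzero /\
        forall v, v <> vzero -> dot G v = 0 -> 0 < quad H v.

(** For p <> q, p1 = p + a (q - p)
    (a <= 0) and q1 = p + b (q - p) (b >= 0) are the boundary points on the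
    line through p and q, p1 on the side of p and q1 on the side of q. *)
Definition hilbert_dist (U : Vec N -> Prop) (p q : Vec N) (d : R) : Prop :=
  (p = q /\ d = 0) \/
  (p <> q /\ exists a b : R,
     a <= 0 /\ 0 <= b /\
     let p1 := vadd p (vscal a (vsub q p)) in
     let q1 := vadd p (vscal b (vsub q p)) in
     boundary U p1 /\ boundary U q1 /\
     d = / 2 * ln ((norm (vsub q p1) / norm (vsub q q1)) *
                   (norm (vsub p q1) / norm (vsub p p1)))).

Definition hilbert_ball (U : Vec N -> Prop) (rho : R) (p : Vec N) : Prop :=
  U p /\ exists d, hilbert_dist U vzero p d /\ d <= rho.

Definition unit_sphere (u : Vec N) : Prop := norm u = 1.

Definition radial_function (U : Vec N -> Prop) (omega : Vec N -> R) : Prop :=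
  forall u, unit_sphere u -> 0 < omega u /\ boundary U (vscal (omega u) u).

Definition is_max_ratio (omega : Vec N -> R) (c : R) : Prop :=
  (exists u, unit_sphere u /\ c = omega u / omega (vopp u)) /\
  (forall u, unit_sphere u -> omega u / omega (vopp u) <= c).

Definition Phi (omega : Vec N -> R) (u : Vec N) (s : R) : Vec N :=
  vscal (tanh s * omega u) u.
Definition Phi_image (omega : Vec N -> R) (Rmax : R) (x : Vec N) : Prop :=
  exists u s, unit_sphere u /\ 0 <= s <= Rmax /\ x = Phi omega u s.

Definition centrally_symmetric (U : Vec N -> Prop) : Prop :=
  forall x, U x -> U (vopp x).

End Vectors.

Definition subset_of {T : Type} (A B : T -> Prop) : Prop := forall x, A x -> B x.

(* On the line through [o] and [Phi omega u s] the boundary points are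
   [omega u * u] and [- omega (- u) * u], so with [t = tanh s] and
   [k = omega u / omega (- u)] the Hilbert distance from [o] to [Phi omega u s]
   is [s + ln ((t k + 1) / (1 + t)) / 2].  As [/ c <= k <= c], the correction
   term lies between [- d1] and [- d2] uniformly in [u] and [s], which gives both
   inclusions for every [rho].  Central symmetry forces [omega (- u) = omega u],
   hence [c = 1]. *)

From HB Require Import structures.
From Stdlib Require Import Reals Lra Psatz FunctionalExtensionality Classical.
From mathcomp Require Import ssreflect ssrfun ssrbool eqtype ssrnat fintype bigop.

Set Implicit Arguments.
Unset Strict Implicit.
Local Open Scope R_scope.

HB.instance Definition _ :=
  Monoid.isComLaw.Build R 0 Rplus (fun a b c => esym (Rplus_assoc a b c)) Rplus_comm Rplus_0_l.

Ltac vext := apply: functional_extensionality => i;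
  rewrite /vscal /vadd /vsub /vopp /vzero.

Section Norm.
Variable N : nat.
Implicit Types x u : Vec N.

Lemma dot_scal k x : dot (vscal k x) (vscal k x) = k * k * dot x x.
Proof. by rewrite /dot /vscal; elim/big_rec2: _ => [|i y1 y2 _ ->]; ring. Qed.

Lemma norm_scal k x : norm (vscal k x) = Rabs k * norm x.
Proof. by rewrite /norm dot_scal sqrt_mult_alt ?sqrt_Rsqr_abs //; nra. Qed.

Lemma norm_vzero : norm (@vzero N) = 0.
Proof.
have -> : @vzero N = vscal 0 (@vzero N) by vext; ring.
by rewrite norm_scal Rabs_R0 Rmult_0_l.
Qed.

Lemma vscalN1 x : vopp x = vscal (-1) x.
Proof. by vext; ring. Qed.

Lemma norm_opp x : norm (vopp x) = norm x.
Proof. by rewrite vscalN1 norm_scal Rabs_Ropp Rabs_R1 Rmult_1_l. Qed.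

Lemma norm_vsubC x y : norm (vsub x y) = norm (vsub y x).
Proof.
have -> : vsub x y = vscal (-1) (vsub y x) by vext; ring.
by rewrite norm_scal Rabs_Ropp Rabs_R1 Rmult_1_l.
Qed.

Lemma vopp_opp x : vopp (vopp x) = x.
Proof. by vext; ring. Qed.

Lemma unit_sphere_opp u : unit_sphere u -> unit_sphere (vopp u).
Proof. by rewrite /unit_sphere norm_opp. Qed.

Lemma sqr_le_dot x (j : 'I_N) : x j * x j <= dot x x.
Proof.
rewrite /dot (bigD1 j) //= -{1}(Rplus_0_r (x j * x j)); apply: Rplus_le_compat_l.
by apply: (big_ind (fun v => 0 <= v)); [lra | move=> a b; lra | move=> i _; nra].
Qed.

Lemma dot_ge0 x : 0 <= dot x x.
Proof. by apply: (big_ind (fun v => 0 <= v)); [lra | move=> a b; lra | move=> i _; nra]. Qed.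

Lemma norm_gt0 x : x <> @vzero N -> 0 < norm x.
Proof.
move=> x_neq0; apply: sqrt_lt_R0.
case: (Rle_lt_or_eq_dec _ _ (dot_ge0 x)) => // dot0; case: x_neq0.
by vext; have := sqr_le_dot x i; rewrite -dot0; nra.
Qed.

Lemma unit_sphere_basis (j : 'I_N) : unit_sphere (basis j).
Proof.
rewrite /unit_sphere /norm /dot (bigD1 j) //= big1 /basis.
  by rewrite eqxx Rmult_1_l Rplus_0_r sqrt_1.
by move=> i /negbTE ->; ring.
Qed.

End Norm.

Lemma ln_le x y : 0 < x -> x <= y -> ln x <= ln y.
Proof.
move=> x_gt0 /Rle_lt_or_eq_dec [xy|<-]; last lra.
exact/Rlt_le/ln_increasing.
Qed.

Lemma tanh_exp s : tanh s = (exp s * exp s - 1) / (exp s * exp s + 1).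
Proof. rewrite /tanh /sinh /cosh exp_Ropp; have := exp_pos s => e_gt0; field; nra. Qed.

Lemma tanh_0 : tanh 0 = 0.
Proof. by rewrite tanh_exp exp_0; field. Qed.

Lemma tanh_ge0_lt1 s : 0 <= s -> 0 <= tanh s < 1.
Proof.
move=> s_ge0; rewrite tanh_exp; have := exp_ineq1_le s => e_ge1.
have den_gt0 : 0 < exp s * exp s + 1 by nra.
split; first by apply: Rmult_le_pos; [nra | exact/Rlt_le/Rinv_0_lt_compat].
by apply/(Rmult_lt_reg_r _ _ _ den_gt0); field_simplify; lra.
Qed.

Lemma tanh_gt0 s : 0 < s -> 0 < tanh s.
Proof.
move=> s_gt0; rewrite tanh_exp.
have e_gt1 : 1 + s < exp s by apply: exp_ineq1; lra.
apply: Rdiv_lt_0_compat; nra.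
Qed.

Definition artanh (t : R) : R := / 2 * ln ((1 + t) / (1 - t)).

Lemma exp_artanh_sqr t : -1 < t < 1 -> exp (artanh t) * exp (artanh t) = (1 + t) / (1 - t).
Proof.
move=> t_bnd; rewrite -exp_plus /artanh.
have -> : / 2 * ln ((1 + t) / (1 - t)) + / 2 * ln ((1 + t) / (1 - t))
          = ln ((1 + t) / (1 - t)) by field.
by rewrite exp_ln //; apply: Rdiv_lt_0_compat; lra.
Qed.

Lemma tanh_artanh t : -1 < t < 1 -> tanh (artanh t) = t.
Proof. by move=> t_bnd; rewrite tanh_exp exp_artanh_sqr //; field; lra. Qed.

Lemma artanh_tanh s : artanh (tanh s) = s.
Proof.
rewrite /artanh tanh_exp; have := exp_pos s => e_gt0.
have -> : (1 + (exp s * exp s - 1) / (exp s * exp s + 1)) /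
          (1 - (exp s * exp s - 1) / (exp s * exp s + 1)) = exp s * exp s.
  by field; split; nra.
by rewrite ln_mult // ln_exp; field.
Qed.

Lemma artanh_ge0 t : 0 <= t < 1 -> 0 <= artanh t.
Proof.
move=> t_bnd; apply: Rmult_le_pos; first lra.
rewrite -ln_1; apply: ln_le; first lra.
apply/(Rmult_le_reg_r (1 - t)); first lra.
by field_simplify; lra.
Qed.

Lemma mediant_bounds m M k t : m <= 1 <= M -> m <= k <= M -> 0 <= t <= 1 ->
  / 2 * (1 + m) <= (t * k + 1) / (1 + t) <= / 2 * (1 + M).
Proof.
move=> mM k_bnd t_bnd; split.
- apply/(Rmult_le_reg_r (1 + t)); first lra.
  by field_simplify; [nra | lra].
- apply/(Rmult_le_reg_r (1 + t)); first lra.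
  by field_simplify; [nra | lra].
Qed.

Lemma vadd0_scal_sub0 N a (x : Vec N) :
  vadd (@vzero N) (vscal a (vsub x (@vzero N))) = vscal a x.
Proof. by vext; ring. Qed.

Lemma hilbert_dist_origin N (U : Vec N -> Prop) x d : x <> @vzero N ->
  hilbert_dist U (@vzero N) x d <->
  exists a b, a <= 0 /\ 0 <= b /\ boundary U (vscal a x) /\ boundary U (vscal b x) /\
    d = / 2 * ln (Rabs (1 - a) / Rabs (1 - b) * (Rabs b / Rabs a)).
Proof.
move=> x_neq0; have nx_gt0 := norm_gt0 x_neq0.
have ratio a b : norm (vsub x (vscal a x)) / norm (vsub x (vscal b x)) *
    (norm (vsub (@vzero N) (vscal b x)) / norm (vsub (@vzero N) (vscal a x)))
    = Rabs (1 - a) / Rabs (1 - b) * (Rabs b / Rabs a).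
  have sub_scal k : vsub x (vscal k x) = vscal (1 - k) x by vext; ring.
  have sub0_scal k : vsub (@vzero N) (vscal k x) = vscal (- k) x by vext; ring.
  rewrite !sub_scal !sub0_scal !norm_scal !Rabs_Ropp /Rdiv !Rinv_mult.
  have nxK : norm x * / norm x = 1 by field; lra.
  transitivity (Rabs (1 - a) * / Rabs (1 - b) * (Rabs b * / Rabs a) *
                ((norm x * / norm x) * (norm x * / norm x))); first ring.
  by rewrite nxK; ring.
split.
- case=> [[/esym/x_neq0] // | [_ [a [b [? [? ]]]]]]; cbv zeta.
  by rewrite !vadd0_scal_sub0 => -[? [? ->]]; exists a, b; rewrite ratio.
- case=> [a [b [? [? [? [? ->]]]]]]; right; split; first by move/esym.
  by exists a, b; cbv zeta; rewrite !vadd0_scal_sub0 ratio.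
Qed.

Definition hilbert_radius (k s : R) : R :=
  s + / 2 * ln ((tanh s * k + 1) / (1 + tanh s)).

Lemma hilbert_radius_0 k : hilbert_radius k 0 = 0.
Proof.
rewrite /hilbert_radius tanh_0.
have -> : (0 * k + 1) / (1 + 0) = 1 by field.
by rewrite ln_1; ring.
Qed.

Lemma hilbert_radius_cross_ratio s w w' a b : 0 < s -> 0 < w -> 0 < w' ->
  b * (tanh s * w) = w -> - a * (tanh s * w) = w' ->
  / 2 * ln (Rabs (1 - a) / Rabs (1 - b) * (Rabs b / Rabs a)) = hilbert_radius (w / w') s.
Proof.
move=> s_gt0 w_gt0 w'_gt0 eq_b eq_a.
have [_ t_lt1] : 0 <= tanh s < 1 by apply: tanh_ge0_lt1; lra.
have t_gt0 : 0 < tanh s by exact: tanh_gt0.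
set t := tanh s in t_lt1 t_gt0 eq_a eq_b *.
have -> : b = / t by apply/(Rmult_eq_reg_r (t * w)); [rewrite eq_b; field | nra]; lra.
have -> : a = - (w' / (t * w)).
  by apply/(Rmult_eq_reg_r (t * w)); [rewrite -eq_a; field | nra]; lra.
have w't_gt0 : 0 < w' / (t * w) by apply: Rdiv_lt_0_compat; nra.
have t'_gt1 : 1 < / t by rewrite -Rinv_1; apply: Rinv_lt_contravar; nra.
rewrite (Rabs_left (1 - / t)) ?Rabs_Ropp ?Rabs_right; try lra.
have -> : (1 - - (w' / (t * w))) / - (1 - / t) * (/ t / (w' / (t * w)))
          = (1 + t) / (1 - t) * ((t * (w / w') + 1) / (1 + t)) by field; lra.
have k_gt0 : 0 < w / w' by apply: Rdiv_lt_0_compat.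
rewrite ln_mult; try (apply: Rdiv_lt_0_compat; nra).
by have := artanh_tanh s; rewrite /hilbert_radius /artanh -/t; lra.
Qed.

Lemma hilbert_radius_bounds m M k s : 0 < m <= 1 -> 1 <= M -> m <= k <= M -> 0 <= s ->
  s + / 2 * ln (/ 2 * (1 + m)) <= hilbert_radius k s <= s + / 2 * ln (/ 2 * (1 + M)).
Proof.
move=> m_bnd M_ge1 k_bnd s_ge0; have [t_ge0 t_lt1] := tanh_ge0_lt1 s_ge0.
have [lo hi] : / 2 * (1 + m) <= (tanh s * k + 1) / (1 + tanh s) <= / 2 * (1 + M).
  by apply: mediant_bounds; lra.
rewrite /hilbert_radius; split; apply/Rplus_le_compat_l/Rmult_le_compat_l; try lra.
- by apply: ln_le; lra.
- by apply: ln_le; lra.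
Qed.

Lemma boundary_vopp N (U : Vec N -> Prop) x :
  centrally_symmetric U -> boundary U x -> boundary U (vopp x).
Proof.
move=> U_sym [in_near out_near].
have dist_opp y : norm (vsub (vopp y) (vopp x)) = norm (vsub y x).
  by rewrite -norm_opp; congr norm; vext; ring.
split=> e e_gt0.
- have [y [Uy y_near]] := in_near e e_gt0.
  by exists (vopp y); rewrite dist_opp; split=> //; apply: U_sym.
- have [y [y_out y_near]] := out_near e e_gt0.
  exists (vopp y); rewrite dist_opp; split=> // /U_sym.
  by rewrite vopp_opp.
Qed.

Lemma Phi_0 N (omega : Vec N -> R) u : Phi omega u 0 = @vzero N.
Proof. by rewrite /Phi tanh_0; vext; ring. Qed.

Section Radial.
Variable n : nat.
Variable U : Vec n.+1 -> Prop.
Hypothesis U_open : is_open U.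
Hypothesis U_convex : is_convex U.
Hypothesis U_0 : U (@vzero n.+1).

Lemma boundary_notin x : boundary U x -> ~ U x.
Proof.
move=> [_ out_near] /U_open [r [r_gt0 ball_in]].
by have [y [y_out /ball_in]] := out_near r r_gt0.
Qed.

(* [t b = (1 - t) z + t y] with [y] in [U] close to [b] and [z] in a ball
   around the origin contained in [U]. *)
Lemma scal_boundary_in b t : boundary U b -> 0 <= t < 1 -> U (vscal t b).
Proof.
move=> [in_near _] t_bnd; case: (Req_dec t 0) => [-> | t_neq0].
  by have -> : vscal 0 b = @vzero n.+1 by vext; ring.
have [r [r_gt0 ball_in]] := U_open U_0.
have e_gt0 : 0 < r * (1 - t) / t by apply: Rdiv_lt_0_compat; nra.
have [y [Uy y_near]] := in_near _ e_gt0.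
pose z := vscal (t / (1 - t)) (vsub b y).
have Uz : U z.
  apply: ball_in; have -> : vsub z (@vzero n.+1) = z by vext; ring.
  rewrite /z norm_scal norm_vsubC Rabs_right; last first.
    by apply/Rle_ge/Rmult_le_pos; [lra | apply/Rlt_le/Rinv_0_lt_compat; lra].
  apply/(Rmult_lt_reg_l ((1 - t) / t)); first by apply: Rdiv_lt_0_compat; lra.
  by field_simplify; [nra | lra | lra].
have -> : vscal t b = vadd (vscal (1 - t) z) (vscal t y).
  by vext; rewrite /z /vscal /vsub; field; lra.
by apply: U_convex => //; lra.
Qed.

Lemma boundary_ray_unique u l m : 0 < l -> 0 < m ->
  boundary U (vscal l u) -> boundary U (vscal m u) -> l = m.
Proof.
have not_lt l' m' : 0 < l' -> 0 < m' ->
    boundary U (vscal l' u) -> boundary U (vscal m' u) -> ~ l' < m'.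
  move=> l'_gt0 m'_gt0 Bl' Bm' lt_l'm'; apply: (boundary_notin Bl').
  have -> : vscal l' u = vscal (l' / m') (vscal m' u) by vext; field; lra.
  apply: scal_boundary_in => //; split; first by apply/Rlt_le/Rdiv_lt_0_compat.
  by apply/(Rmult_lt_reg_r m') => //; field_simplify; lra.
move=> l_gt0 m_gt0 Bl Bm.
by have := not_lt l m l_gt0 m_gt0 Bl Bm; have := not_lt m l m_gt0 l_gt0 Bm Bl; lra.
Qed.

Variable omega : Vec n.+1 -> R.
Hypothesis omega_radial : radial_function U omega.

Lemma radial_boundary_eq u r : unit_sphere u -> 0 < r ->
  boundary U (vscal r u) -> r = omega u.
Proof.
by move=> /omega_radial [w_gt0 Bw] r_gt0 Br; apply: boundary_ray_unique Br Bw.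
Qed.

Lemma boundary_scal_ray u r b : unit_sphere u -> 0 < r -> 0 <= b ->
  boundary U (vscal b (vscal r u)) -> b * r = omega u.
Proof.
move=> u_unit r_gt0 b_ge0 Bb.
have b_neq0 : b <> 0.
  move=> b0; apply: (boundary_notin Bb).
  by have -> : vscal b (vscal r u) = @vzero n.+1 by vext; rewrite b0; ring.
apply: radial_boundary_eq => //; first nra.
by have <- : vscal b (vscal r u) = vscal (b * r) u by vext; ring.
Qed.

Lemma Phi_in_U u s : unit_sphere u -> 0 <= s -> U (Phi omega u s).
Proof.
move=> /omega_radial [_ Bw] s_ge0.
have -> : Phi omega u s = vscal (tanh s) (vscal (omega u) u) by rewrite /Phi; vext; ring.
apply: scal_boundary_in Bw _; exact: tanh_ge0_lt1.
Qed.

Lemma norm_lt_radial x : U x -> x <> @vzero n.+1 ->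
  norm x < omega (vscal (/ norm x) x).
Proof.
move=> Ux x_neq0; have nx_gt0 := norm_gt0 x_neq0.
set u := vscal (/ norm x) x.
have u_unit : unit_sphere u.
  rewrite /unit_sphere norm_scal Rabs_right; first by field; lra.
  by apply/Rle_ge/Rlt_le/Rinv_0_lt_compat.
have [w_gt0 Bw] := omega_radial u_unit.
apply: Rnot_le_lt => w_le; apply: (boundary_notin Bw).
have -> : vscal (omega u) u = vadd (vscal (1 - omega u / norm x) (@vzero n.+1))
                                   (vscal (omega u / norm x) x).
  by rewrite /u; vext; field; lra.
apply: U_convex => //; split; first by apply/Rlt_le/Rdiv_lt_0_compat.
by apply/(Rmult_le_reg_r (norm x)) => //; field_simplify; lra.
Qed.

Lemma Phi_surjective x : U x ->
  exists u s, unit_sphere u /\ 0 <= s /\ x = Phi omega u s.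
Proof.
move=> Ux; case: (classic (x = @vzero n.+1)) => [-> | x_neq0].
  exists (basis ord0), 0; rewrite Phi_0.
  by split; [exact: unit_sphere_basis | split; first lra].
have nx_gt0 := norm_gt0 x_neq0; have nx_lt := norm_lt_radial Ux x_neq0.
set u := vscal (/ norm x) x in nx_lt *.
have w_gt0 : 0 < omega u by apply: Rlt_trans nx_lt.
have t_bnd : 0 <= norm x / omega u < 1.
  split; first by apply/Rlt_le/Rdiv_lt_0_compat.
  by apply/(Rmult_lt_reg_r (omega u)) => //; field_simplify; lra.
exists u, (artanh (norm x / omega u)); split; last split.
- rewrite /unit_sphere norm_scal Rabs_right; first by field; lra.
  by apply/Rle_ge/Rlt_le/Rinv_0_lt_compat.
- exact: artanh_ge0.
- rewrite /Phi tanh_artanh; last lra.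
  have -> : norm x / omega u * omega u = norm x by field; lra.
  by rewrite /u; vext; field; lra.
Qed.

Lemma hilbert_dist_Phi u s d : unit_sphere u -> 0 <= s ->
  hilbert_dist U (@vzero n.+1) (Phi omega u s) d <->
  d = hilbert_radius (omega u / omega (vopp u)) s.
Proof.
move=> u_unit /Rle_lt_or_eq_dec [s_gt0 | <-]; last first.
  by rewrite Phi_0 hilbert_radius_0; split=> [[[_ ->] | [[]]] // | ->]; left.
have [w_gt0 Bw] := omega_radial u_unit.
have [w'_gt0 Bw'] := omega_radial (unit_sphere_opp u_unit).
have t_gt0 : 0 < tanh s by exact: tanh_gt0.
have tw_gt0 : 0 < tanh s * omega u by nra.
have Phi_neq0 : Phi omega u s <> @vzero n.+1.
  by move/(f_equal (@norm _)); rewrite /Phi norm_scal u_unit norm_vzero Rabs_right; lra.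
have scal_opp a : vscal a (Phi omega u s) = vscal (- a) (vscal (tanh s * omega u) (vopp u)).
  by rewrite /Phi; vext; ring.
rewrite hilbert_dist_origin //; split.
- case=> [a [b [a_le0 [b_ge0 [Ba [Bb ->]]]]]].
  apply: hilbert_radius_cross_ratio => //; first exact: boundary_scal_ray Bb.
  by rewrite scal_opp in Ba; apply: boundary_scal_ray Ba => //; [exact: unit_sphere_opp | lra].
- move=> ->; exists (- (omega (vopp u) / (tanh s * omega u))), (/ tanh s).
  have : 0 < omega (vopp u) / (tanh s * omega u) by apply: Rdiv_lt_0_compat.
  split; first lra.
  split; first exact/Rlt_le/Rinv_0_lt_compat.
  split; first by rewrite scal_opp; congr boundary: Bw'; vext; field; lra.
  split; first by congr boundary: Bw; rewrite /Phi; vext; field; lra.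
  by symmetry; apply: hilbert_radius_cross_ratio => //; field; lra.
Qed.

Variable c : R.
Hypothesis c_max : is_max_ratio omega c.

Lemma radial_ratio_gt0 u : unit_sphere u -> 0 < omega u / omega (vopp u).
Proof.
move=> u_unit; have [w_gt0 _] := omega_radial u_unit.
by have [w'_gt0 _] := omega_radial (unit_sphere_opp u_unit); apply: Rdiv_lt_0_compat.
Qed.

Lemma max_ratio_gt0 : 0 < c.
Proof. by have [[u0 [u0_unit ->]] _] := c_max; apply: radial_ratio_gt0. Qed.

Lemma radial_ratio_bounds u : unit_sphere u -> / c <= omega u / omega (vopp u) <= c.
Proof.
move=> u_unit; have [_ ratio_le] := c_max; split; last exact: ratio_le.
have := ratio_le _ (unit_sphere_opp u_unit); rewrite vopp_opp => opp_le.
have k_gt0 := radial_ratio_gt0 u_unit; have c_gt0 := max_ratio_gt0.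
rewrite -[_ / _]Rinv_inv; apply: Rinv_le_contravar; last by rewrite Rinv_div.
exact: Rinv_0_lt_compat.
Qed.

Lemma max_ratio_ge1 : 1 <= c.
Proof.
have [[u0 [u0_unit _]] _] := c_max; have [lo hi] := radial_ratio_bounds u0_unit.
have c_gt0 := max_ratio_gt0; have cV_le : / c <= c by lra.
apply: Rnot_lt_le => c_lt1; have : 1 < / c by rewrite -Rinv_1; apply: Rinv_lt_contravar; nra.
by nra.
Qed.

Lemma symmetric_max_ratio : centrally_symmetric U -> c = 1.
Proof.
move=> U_sym; have [[u0 [u0_unit ->]] _] := c_max.
have u0'_unit := unit_sphere_opp u0_unit.
have [w'_gt0 Bw'] := omega_radial u0'_unit.
have := boundary_vopp U_sym Bw'.
have -> : vopp (vscal (omega (vopp u0)) (vopp u0)) = vscal (omega (vopp u0)) u0 by vext; ring.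
move=> /(radial_boundary_eq u0_unit w'_gt0) <-.
by field; lra.
Qed.

Lemma hilbert_radius_Phi_bounds u s : unit_sphere u -> 0 <= s ->
  s + / 2 * ln (/ 2 * (1 + / c)) <= hilbert_radius (omega u / omega (vopp u)) s
  <= s + / 2 * ln (/ 2 * (1 + c)).
Proof.
move=> u_unit s_ge0; have c_ge1 := max_ratio_ge1.
apply: hilbert_radius_bounds => //; last exact: radial_ratio_bounds.
split; first exact/Rinv_0_lt_compat/max_ratio_gt0.
by rewrite -Rinv_1; apply: Rinv_le_contravar; lra.
Qed.
End Radial.

Theorem mainTheorem5 (n : nat) (U : Vec n.+1 -> Prop)
  (omega : Vec n.+1 -> R) (c : R) :
  is_open U -> is_bounded U -> is_convex U -> U (@vzero n.+1) ->
  C3_pos_curv_boundary U ->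
  radial_function U omega ->
  is_max_ratio omega c ->
  let d1 := - (/ 2) * ln (/ 2 * (1 + / c)) in
  let d2 := - (/ 2) * ln (/ 2 * (1 + c)) in
  (forall d, d1 <= d -> exists rho0 : R, forall rho, rho0 <= rho ->
      subset_of (hilbert_ball U rho) (Phi_image omega (rho + d))) /\
  (forall d, d <= d2 -> exists rho0 : R, forall rho, rho0 <= rho ->
      subset_of (Phi_image omega (rho + d)) (hilbert_ball U rho)) /\
  (centrally_symmetric U -> d1 = 0 /\ d2 = 0).
Proof.
move=> U_open _ U_convex U_0 _ omega_radial c_max d1 d2.
have dist_Phi := hilbert_dist_Phi U_open U_convex U_0 omega_radial.
have radius_bounds u s : unit_sphere u -> 0 <= s ->
    s - d1 <= hilbert_radius (omega u / omega (vopp u)) s <= s - d2.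
  move=> u_unit s_ge0.
  by have := hilbert_radius_Phi_bounds omega_radial c_max u_unit s_ge0; rewrite /d1 /d2; lra.
split; [|split].
- move=> d d1_le; exists (- d) => rho rho_ge x [Ux [r [dist_x r_le]]].
  have [u [s [u_unit [s_ge0 x_eq]]]] := Phi_surjective U_open U_convex U_0 omega_radial Ux.
  subst x; have := (dist_Phi u s r u_unit s_ge0).1 dist_x.
  have := radius_bounds u s u_unit s_ge0.
  by exists u, s; split=> //; split; [split; lra |].
- move=> d d_le; exists 0 => rho _ x [u [s [u_unit [[s_ge0 s_le] ->]]]].
  split; first exact: Phi_in_U.
  exists (hilbert_radius (omega u / omega (vopp u)) s); split; first exact/dist_Phi.
  by have := radius_bounds u s u_unit s_ge0; lra.
- move=> U_sym.
  rewrite /d1 /d2 (symmetric_max_ratio U_open U_convex U_0 omega_radial c_max U_sym).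
  have -> : / 2 * (1 + / 1) = 1 by field.
  have -> : / 2 * (1 + 1) = 1 by field.
  by rewrite ln_1; split; ring.
Qed.
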